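(* Let $G$ and $H$ be co-$H$ spaces and $X$ a pointed space. Then composition of maps induces a well-defined homomorphism $e[G,H]\otimes e[H,X]\to e[G,X]$ (i.e. composition of congruence classes is bilinear).
   Context: Two pointed maps $f,g\colon A\to B$ are congruent if $\Sigma f\simeq\Sigma g$; $e[A,B]$ is the set of congruence classes of pointed maps $A\to B$. For a co-$H$ space $G$, $e[G,B]$ is an Abelian group with operation induced by the co-$H$ structure of $G$. *)

From HB Require Import structures.
From mathcomp Require Import all_boot all_order all_algebra.
From mathcomp Require Import generic_quotient.
From mathcomp Require Import all_classical all_reals topology wedge_sigT.
From mathcomp Require Import Rstruct Rstruct_topology.

Set Implicit Arguments.
Unset Strict Implicit.
Unset Printing Implicit Defensive.

Import Order.TTheory GRing.Theory Num.Theory.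
Local Open Scope classical_set_scope.
Local Open Scope ring_scope.
Local Open Scope quotient_scope.

Definition unit_interval : Type := set_type (`[0, 1]%classic : set Rdefinitions.R).
HB.instance Definition _ := Topological.on unit_interval.

Lemma zero_in_unit_interval : (0 : Rdefinitions.R) \in (`[0, 1]%classic : set _).
Proof. by rewrite inE /= in_itv /= lexx ler01. Qed.

Definition ui0 : unit_interval := exist _ 0 zero_in_unit_interval.
HB.instance Definition _ := isPointed.Build unit_interval ui0.

Definition pointed_map (A B : ptopologicalType) (f : A -> B) : Prop :=
  continuous f /\ f point = point.

Definition phomotopic (A B : ptopologicalType) (f g : A -> B) : Prop :=
  exists Hm : unit_interval * A -> B,
    [/\ continuous Hm,
        (forall t : unit_interval, val t = 0 -> forall a, Hm (t, a) = f a),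
        (forall t : unit_interval, val t = 1 -> forall a, Hm (t, a) = g a) &
        (forall t : unit_interval, Hm (t, point) = point)].

(* Reduced suspension  Sigma A = ([0,1] x A) / ([0,1] x {*} u {0,1} x A). *)
Section Suspension.
Variable A : ptopologicalType.

Definition susp_collapsed (x : unit_interval * A) : bool :=
  [|| val x.1 == 0, val x.1 == 1 | x.2 == point].

Definition susp_r (x y : unit_interval * A) : bool :=
  (x == y) || (susp_collapsed x && susp_collapsed y).

Lemma susp_r_refl : reflexive susp_r.
Proof. by move=> x; rewrite /susp_r eqxx. Qed.

Lemma susp_r_sym : symmetric susp_r.
Proof. by move=> x y; rewrite /susp_r eq_sym andbC. Qed.

Lemma susp_r_trans : transitive susp_r.
Proof.
move=> y x z /orP[/eqP -> //|/andP[cx cy]] /orP[/eqP <-|/andP[_ cz]].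
  by rewrite /susp_r cx cy orbT.
by rewrite /susp_r cx cz orbT.
Qed.

Definition susp_rel := EquivRel susp_r susp_r_refl susp_r_sym susp_r_trans.

Definition susp_quot := {eq_quot susp_rel}.
Definition Susp : Type := quotient_topology susp_quot.
HB.instance Definition _ := Topological.on Susp.
HB.instance Definition _ := Quotient.on Susp.

Definition susp_point : Susp := \pi_Susp (ui0, point).
HB.instance Definition _ := isPointed.Build Susp susp_point.

End Suspension.

(* Suspension of a (pointed) map f : A -> B:  Sigma f [t, a] = [t, f a]
   (well defined on classes when f is pointed). *)
Definition susp_map (A B : ptopologicalType) (f : A -> B) : Susp A -> Susp B :=
  fun q => \pi_(Susp B) ((repr q).1, f (repr q).2).

Definition congruent (A B : ptopologicalType) (f g : A -> B) : Prop :=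
  phomotopic (susp_map f) (susp_map g).

Definition wedge2 (G : ptopologicalType) : ptopologicalType :=
  pwedge (fun _ : bool => G).

Definition wedge_proj (G : ptopologicalType) (b : bool) : wedge2 G -> G :=
  wedge_fun (fun (i : bool) (x : G) => if i == b then x else point).

Definition coH_structure (G : ptopologicalType) (mu : G -> wedge2 G) : Prop :=
  [/\ pointed_map mu,
      phomotopic (wedge_proj true \o mu) idfun &
      phomotopic (wedge_proj false \o mu) idfun].

Definition coH_sum (G B : ptopologicalType) (mu : G -> wedge2 G) (f g : G -> B) : G -> B :=
  wedge_fun (fun (i : bool) (x : G) => if i then f x else g x) \o mu.

(* Composition is well defined on congruence classes because suspension is a
   functor and pointed homotopy is compatible with composition on both sides.
   Additivity in the first variable holds on the nose: post-composition
   commutes with the co-H sum.  For the second variable, both sides are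
   compared, after suspension, with the suspension sum of Susp H -> Susp X
   (run through the first map on the first half of the suspension coordinate,
   through the second on the other half).  For any co-H structure mu,
   Susp ((a, b) o mu) is homotopic to the suspension sum of a and b: a
   homotopy slides each wedge summand onto its half of the suspension
   coordinate, after which the two composites of mu with the collapse maps are
   homotopic to the identity.  Precomposition with Susp f commutes with the
   suspension sum exactly. *)

From HB Require Import structures.
From mathcomp Require Import all_boot all_order all_algebra generic_quotient.
From mathcomp Require Import all_classical all_reals topology wedge_sigT.
From mathcomp Require Import Rstruct Rstruct_topology normedtype.
From mathcomp Require Import lra.

Set Implicit Arguments.
Unset Strict Implicit.
Unset Printing Implicit Defensive.

Import Order.TTheory GRing.Theory Num.Theory.
Local Open Scope classical_set_scope.
Local Open Scope ring_scope.
Local Open Scope quotient_scope.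

Local Notation RR := Rdefinitions.R.

Lemma continuous_fst (T U : topologicalType) : continuous (@fst T U).
Proof. by move=> x; exact: cvg_fst. Qed.

Lemma continuous_snd (T U : topologicalType) : continuous (@snd T U).
Proof. by move=> x; exact: cvg_snd. Qed.

Lemma continuous_pair (T U V : topologicalType) (f : T -> U) (g : T -> V) :
  continuous f -> continuous g -> continuous (fun x => (f x, g x)).
Proof. by move=> cf cg x; apply: cvg_pair; [exact: cf | exact: cg]. Qed.

Lemma continuous_affine (T : topologicalType) (u : T -> RR) (a b : RR) :
  continuous u -> continuous (fun x => a * u x + b).
Proof.
move=> cu x; apply: (@continuousD RR RR^o T (fun x => a * u x) (fun _ => b));
  last exact: cst_continuous.
by apply: (@continuousM RR T (fun _ => a) u); [exact: cst_continuous | exact: cu].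
Qed.

Lemma continuous_if_le (T S : topologicalType) (h : T -> RR) (c : RR)
    (f g : T -> S) :
  continuous h -> continuous f -> continuous g ->
  (forall x, h x = c -> f x = g x) ->
  continuous (fun x => if h x <= c then f x else g x).
Proof.
move=> ch cf cg fg; apply/continuous_subspace_setT.
pose A := h @^-1` [set r | r <= c]; pose B := h @^-1` [set r | c <= r].
have closed_pre (D : set RR) : closed D -> closed (h @^-1` D).
  by move=> cD; apply: preimage_closed => // x _; exact: ch.
have -> : [set: T] = A `|` B.
  by apply/seteqP; split => x // _; case: (lerP (h x) c) => hx; [left|right; exact: ltW].
apply: withinU_continuous; [exact: closed_pre (@closed_le RR c)|
  exact: closed_pre (@closed_ge RR c)| |].
- apply: (@subspace_eq_continuous _ _ _ f); last exact: continuous_subspaceT.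
  by move=> x /set_mem; rewrite /A /preimage /= => hx; rewrite /from_subspace hx.
- apply: (@subspace_eq_continuous _ _ _ g); last exact: continuous_subspaceT.
  move=> x /set_mem; rewrite /B /preimage /= => hx; rewrite /from_subspace.
  case: ifP => // hx'.
  by apply/esym/fg/eqP; rewrite eq_le hx hx'.
Qed.

Lemma compact_locally_compact (T : topologicalType) :
  compact [set: T] -> locally_compact [set: T].
Proof.
move=> cT x _; rewrite withinET; exists setT; first exact: filterT.
by split => //; exact: closedT.
Qed.

Lemma prod_hausdorff (U V : topologicalType) :
  hausdorff_space U -> hausdorff_space V -> hausdorff_space (U * V)%type.
Proof.
rewrite !open_hausdorff => hU hV x y xy.
have separate (W : topologicalType) (pr : U * V -> W) :
    continuous pr -> (forall a b : W, a != b -> exists2 AB : set W * set W,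
      (a \in AB.1 /\ b \in AB.2) & [/\ open AB.1, open AB.2 & AB.1 `&` AB.2 == set0]) ->
    pr x != pr y -> exists2 AB : set (U * V) * set (U * V),
      (x \in AB.1 /\ y \in AB.2) & [/\ open AB.1, open AB.2 & AB.1 `&` AB.2 == set0].
  move=> cpr hW /hW [[P Q] /= [Px Qy] [oP oQ /eqP PQ]].
  exists (pr @^-1` P, pr @^-1` Q) => /=.
    by split; rewrite inE /=; apply/set_mem.
  split; [exact: open_comp (fun z _ => cpr z) oP|
          exact: open_comp (fun z _ => cpr z) oQ|].
  apply/eqP; rewrite -subset0 => z [/= zp zq].
  by have : (P `&` Q) (pr z) by []; rewrite PQ.
have [e1|e1] := eqVneq x.1 y.1; last exact: separate (@continuous_fst U V) hU e1.
apply: separate (@continuous_snd U V) hV _.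
by apply: contra_neq xy; case: x y e1 => ? ? [? ?] /= -> ->.
Qed.

Definition clampR (x : RR) : RR := Num.min (Num.max x 0) 1.

Lemma clampR_itv x : clampR x \in (`[0, 1]%classic : set RR).
Proof.
rewrite inE /= in_itv /= /clampR; apply/andP; split.
  by rewrite le_min ler01 le_max lexx orbT.
by rewrite ge_min lexx orbT.
Qed.

Definition clamp (x : RR) : unit_interval := exist _ (clampR x) (clampR_itv x).

Lemma clamp_continuous : continuous clamp.
Proof.
apply: (@continuous_comp_initial _ _ _ (@set_val _ _)) => x.
apply: (@continuous_min RR RR (fun x => Num.max x 0) (fun _ => 1) x);
  last exact: cst_continuous.
apply: (@continuous_max RR RR id (fun _ => 0) x);
  [by move=> ?; exact: cvg_id | exact: cst_continuous].
Qed.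

Lemma val_unit_interval_continuous : continuous (val : unit_interval -> RR).
Proof. exact: initial_continuous. Qed.

Lemma continuous_val_fst (A : topologicalType) :
  continuous (fun z : unit_interval * A => val z.1).
Proof.
move=> z; apply: (@continuous_comp _ _ _ fst (fun t : unit_interval => val t));
  [exact: continuous_fst | exact: val_unit_interval_continuous].
Qed.

Lemma unit_interval_ge0 (t : unit_interval) : 0 <= val t.
Proof. by case: t => x /= /set_mem; rewrite /= in_itv /= => /andP[]. Qed.

Lemma unit_interval_le1 (t : unit_interval) : val t <= 1.
Proof. by case: t => x /= /set_mem; rewrite /= in_itv /= => /andP[]. Qed.

Lemma val_clamp x : 0 <= x -> x <= 1 -> val (clamp x) = x.
Proof. by move=> x0 x1; rewrite /= /clampR (max_l x0) (min_l x1). Qed.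

Lemma val_clamp_le0 x : x <= 0 -> val (clamp x) = 0.
Proof. by move=> x0; rewrite /= /clampR (max_r x0) (min_l ler01). Qed.

Lemma val_clamp_ge1 x : 1 <= x -> val (clamp x) = 1.
Proof. by move=> x1; rewrite /= /clampR (max_l (le_trans ler01 x1)) (min_r x1). Qed.

Lemma clampK (t : unit_interval) : clamp (val t) = t.
Proof. by apply: val_inj; rewrite val_clamp ?unit_interval_ge0 ?unit_interval_le1. Qed.

Definition ui1 : unit_interval := clamp 1.

Lemma val_ui1 : val ui1 = 1.
Proof. by rewrite val_clamp // ler01. Qed.

Lemma unit_interval_compact : compact [set: unit_interval].
Proof.
have -> : [set: unit_interval] = clamp @` `[0, 1]%classic.
  apply/seteqP; split => t // _; exists (val t); last exact: clampK.
  by rewrite /= in_itv /= unit_interval_ge0 unit_interval_le1.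
apply: continuous_compact; last exact: segment_compact.
by apply: continuous_subspaceT => x; exact: clamp_continuous.
Qed.

Lemma unit_interval2_compact : compact [set: unit_interval * unit_interval].
Proof. by rewrite -setXTT; exact: compact_setX unit_interval_compact unit_interval_compact. Qed.

Lemma unit_interval_hausdorff : hausdorff_space unit_interval.
Proof.
rewrite open_hausdorff => x y xy.
have : val x != val y by apply: contra_neq xy => /val_inj.
move: (@Rhausdorff RR); rewrite open_hausdorff => /[apply] -[[A B]] /=.
move=> [Ax By] [oA oB /eqP AB0].
exists (val @^-1` A, val @^-1` B) => /=.
  by split; rewrite inE /=; apply/set_mem.
split; [by exists A | by exists B |].
apply/eqP; rewrite -subset0 => z [/= za zb].
by have : (A `&` B) (val z) by []; rewrite AB0.
Qed.

Lemma unit_interval_locally_compact : locally_compact [set: unit_interval].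
Proof. exact: compact_locally_compact unit_interval_compact. Qed.

Definition affine_ui (a b : RR) (t : unit_interval) : unit_interval :=
  clamp (a * val t + b).

Lemma affine_ui_continuous a b : continuous (affine_ui a b).
Proof.
move=> t; apply: continuous_comp; last exact: clamp_continuous.
exact: continuous_affine val_unit_interval_continuous t.
Qed.

Section ExponentialLaw.
Import ArrowAsCompactOpen.
Variables (L W : topologicalType).
Hypotheses (lcL : locally_compact [set: L]) (hL : hausdorff_space L).

(* By the exponential law, continuity on [L * Q] follows from continuity of the
   curried map [Q -> C(L, W)], which can be checked on the quotient map. *)
Lemma continuous_prod_quotient (T : topologicalType) (Q : quotType T)
    (F : L * T -> W) :
  continuous F ->
  (forall l a b, \pi_(quotient_topology Q) a = \pi_(quotient_topology Q) b ->
     F (l, a) = F (l, b)) ->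
  continuous (fun z : L * quotient_topology Q => F (z.1, repr z.2)).
Proof.
move=> cF resp.
pose h : quotient_topology Q -> {compact-open, L -> W} := fun q l => F (l, repr q).
have ch : continuous h.
  apply/quotient_continuous.
  have -> : h \o \pi_(quotient_topology Q) = curry (F \o unstable.swap).
    apply/funext => a; apply/funext => l; rewrite /h /= /curry /=.
    by apply: resp; rewrite reprK.
  apply: continuous_curry_fun => x.
  by apply: continuous_comp; [exact: swap_continuous | exact: cF].
have chq q : continuous (h q).
  move=> l; apply: (@continuous_comp _ _ _ (fun l => (l, repr q)) F); last exact: cF.
  by apply: cvg_pair => /=; [exact: cvg_id | exact: cvg_cst].
have -> : (fun z : L * quotient_topology Q => F (z.1, repr z.2))
    = uncurry h \o unstable.swap by apply/funext => -[].
move=> z; apply: continuous_comp; first exact: swap_continuous.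
exact: continuous_uncurry.
Qed.

Lemma continuous_prod_wedge2 (G : ptopologicalType) (k : L -> bool -> G -> W) :
  (forall i, continuous (fun z : L * G => k z.1 i z.2)) ->
  (forall l i j, k l i point = k l j point) ->
  continuous (fun z : L * wedge2 G =>
    wedge_fun (k z.1 : forall i : bool, (fun _ => G) i -> W) z.2).
Proof.
move=> ck kE.
pose h : wedge2 G -> {compact-open, L -> W} :=
  wedge_fun ((fun (i : bool) (y : G) => (fun l => k l i y) : {compact-open, L -> W})
    : forall i : bool, (fun _ => G) i -> {compact-open, L -> W}).
have ch : continuous h.
  apply: wedge_fun_continuous; last by move=> i j; apply/funext => l; exact: kE.
  move=> i; apply: (@continuous_curry_fun G L W (fun z => k z.2 i z.1)) => z.
  apply: (@continuous_comp _ _ _ unstable.swap (fun z : L * G => k z.1 i z.2));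
    [exact: swap_continuous | exact: ck].
have chw w : continuous (h w).
  rewrite /h /wedge_fun /unstable.sigT_fun /=; case: (repr w) => i y /= l.
  apply: (@continuous_comp _ _ _ (fun l => (l, y)) (fun z : L * G => k z.1 i z.2));
    last exact: ck.
  by apply: continuous_pair; [move=> ?; exact: cvg_id | exact: cst_continuous].
have -> : (fun z : L * wedge2 G =>
    wedge_fun (k z.1 : forall i : bool, (fun _ => G) i -> W) z.2)
    = uncurry h \o unstable.swap.
  apply/funext => -[l w] /=; rewrite /h /wedge_fun /unstable.sigT_fun /=.
  by case: (repr w).
move=> z; apply: continuous_comp; first exact: swap_continuous.
exact: continuous_uncurry.
Qed.

End ExponentialLaw.

Section PointedHomotopy.
Variables A B : ptopologicalType.

Lemma continuous_affine_reparam (K : unit_interval * A -> B) (a b : RR) :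
  continuous K -> continuous (fun z => K (affine_ui a b z.1, z.2)).
Proof.
move=> cK z; apply: (@continuous_comp _ _ _ (fun z => (affine_ui a b z.1, z.2)) K);
  last exact: cK.
apply: continuous_pair; last exact: continuous_snd.
by move=> w; apply: continuous_comp; [exact: continuous_fst | exact: affine_ui_continuous].
Qed.

Lemma phomotopic_pointed (u v : A -> B) :
  phomotopic u v -> u point = point /\ v point = point.
Proof.
case=> Hm [_ H0 H1 Hp]; split; first by rewrite -(H0 ui0) //; exact: Hp.
by rewrite -(H1 ui1) ?val_ui1 //; exact: Hp.
Qed.

Lemma phomotopic_refl (u : A -> B) : pointed_map u -> phomotopic u u.
Proof.
move=> [cu up]; exists (fun z => u z.2); split => //.
by move=> z; apply: continuous_comp; [exact: continuous_snd | exact: cu].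
Qed.

Lemma phomotopic_sym (u v : A -> B) : phomotopic u v -> phomotopic v u.
Proof.
case=> Hm [cH H0 H1 Hp]; exists (fun z => Hm (affine_ui (-1) 1 z.1, z.2)); split => //.
- exact: continuous_affine_reparam.
- by move=> t t0 a; apply: H1; rewrite val_clamp t0; lra.
- by move=> t t1 a; apply: H0; rewrite val_clamp t1; lra.
Qed.

Lemma phomotopic_trans (u v w : A -> B) :
  phomotopic u v -> phomotopic v w -> phomotopic u w.
Proof.
case=> Hm [cH H0 H1 Hp] [Hm' [cH' H0' H1' Hp']].
exists (fun z => if val z.1 <= 2^-1 then Hm (affine_ui 2 0 z.1, z.2)
                 else Hm' (affine_ui 2 (-1) z.1, z.2)); split.
- apply: continuous_if_le; try exact: continuous_affine_reparam.
    exact: continuous_val_fst.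
  move=> z zhalf; rewrite H1 ?H0' // val_clamp zhalf; lra.
- move=> t t0 a /=; rewrite t0 ifT; last lra.
  by rewrite H0 // val_clamp t0; lra.
- move=> t t1 a /=; rewrite t1 ifF; last by apply/negbTE; rewrite -ltNge; lra.
  by rewrite H1' // val_clamp t1; lra.
- by move=> t; case: ifP => _; [exact: Hp | exact: Hp'].
Qed.

Lemma phomotopic_comp_l (C : ptopologicalType) (k : B -> C) (u v : A -> B) :
  pointed_map k -> phomotopic u v -> phomotopic (k \o u) (k \o v).
Proof.
move=> [ck kp] [Hm [cH H0 H1 Hp]]; exists (k \o Hm); split => /=.
- by move=> z; apply: continuous_comp; [exact: cH | exact: ck].
- by move=> t t0 a; rewrite H0.
- by move=> t t1 a; rewrite H1.
- by move=> t; rewrite Hp.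
Qed.

Lemma phomotopic_comp_r (C : ptopologicalType) (m : C -> A) (u v : A -> B) :
  pointed_map m -> phomotopic u v -> phomotopic (u \o m) (v \o m).
Proof.
move=> [cm mp] [Hm [cH H0 H1 Hp]]; exists (fun z => Hm (z.1, m z.2)); split => /=.
- move=> z; apply: (@continuous_comp _ _ _ (fun z : unit_interval * C => (z.1, m z.2)) Hm);
    last exact: cH.
  apply: continuous_pair; first exact: continuous_fst.
  by move=> y; apply: continuous_comp; [exact: continuous_snd | exact: cm].
- by move=> t t0 a; rewrite H0.
- by move=> t t1 a; rewrite H1.
- by move=> t; rewrite mp Hp.
Qed.

End PointedHomotopy.

Lemma pointed_map_comp (A B C : ptopologicalType) (f : A -> B) (g : B -> C) :
  pointed_map f -> pointed_map g -> pointed_map (g \o f).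
Proof.
move=> [cf fp] [cg gp]; split; last by rewrite /= fp gp.
by move=> x; apply: continuous_comp; [exact: cf | exact: cg].
Qed.

Lemma wedge_fun_point (G Z : ptopologicalType) (F : bool -> G -> Z) :
  (forall i j, F i point = F j point) ->
  wedge_fun (F : forall i : bool, (fun _ => G) i -> Z) (point : wedge2 G) = F true point.
Proof. by move=> FE; rewrite (wedge_lift_funE (X := fun _ : bool => G)). Qed.

Lemma wedge_fun_repr (G : ptopologicalType) (w : wedge2 G) :
  exists (i : bool) (y : G), forall (Z : Type) (F : bool -> G -> Z),
    wedge_fun (F : forall i : bool, (fun _ => G) i -> Z) w = F i y.
Proof. by exists (projT1 (repr w)), (projT2 (repr w)). Qed.

Lemma wedge_proj_point (G : ptopologicalType) (b : bool) :
  wedge_proj b (point : wedge2 G) = point.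
Proof.
by rewrite /wedge_proj wedge_fun_point /=; [case: ifP | move=> i j; case: ifP; case: ifP].
Qed.

Lemma coH_sum_pointed (G B : ptopologicalType) (mu : G -> wedge2 G) (f g : G -> B) :
  pointed_map mu -> pointed_map f -> pointed_map g -> pointed_map (coH_sum mu f g).
Proof.
move=> [cm mp] [cf fp] [cg gp].
pose F (i : bool) (x : G) := if i then f x else g x.
have FE i j : F i point = F j point by case: i; case: j; rewrite /F ?fp ?gp.
split; last by rewrite /coH_sum /= mp (wedge_fun_point FE).
move=> x; apply: continuous_comp; first exact: cm.
apply: (@wedge_fun_continuous bool (fun _ => G) (fun i => point) B F) => //.
by case.
Qed.

Lemma comp_coH_sum (G B C : ptopologicalType) (mu : G -> wedge2 G)
    (f1 f2 : G -> B) (g : B -> C) :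
  g \o coH_sum mu f1 f2 = coH_sum mu (g \o f1) (g \o f2).
Proof.
apply/funext => x; rewrite /coH_sum /wedge_fun /=.
by case: (repr _) => -[] y.
Qed.

Section Suspension.
Variable A : ptopologicalType.

Lemma susp_eqP (x y : unit_interval * A) :
  \pi_(Susp A) x = \pi_(Susp A) y <-> susp_r x y.
Proof. by split => /(eqmodP (susp_rel A)). Qed.

Lemma susp_pi_collapsed (x : unit_interval * A) :
  susp_collapsed x -> \pi_(Susp A) x = point.
Proof.
move=> cx; apply/susp_eqP; rewrite /susp_r cx /=; apply/orP; right.
by rewrite /susp_collapsed /= eqxx.
Qed.

Lemma susp_pi0 (s : unit_interval) (x : A) : val s = 0 -> \pi_(Susp A) (s, x) = point.
Proof. by move=> s0; apply: susp_pi_collapsed; rewrite /susp_collapsed /= s0 eqxx. Qed.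

Lemma susp_pi1 (s : unit_interval) (x : A) : val s = 1 -> \pi_(Susp A) (s, x) = point.
Proof. by move=> s1; apply: susp_pi_collapsed; rewrite /susp_collapsed /= s1 eqxx orbT. Qed.

Lemma susp_pi_point (s : unit_interval) : \pi_(Susp A) (s, point) = point.
Proof. by apply: susp_pi_collapsed; rewrite /susp_collapsed /= eqxx !orbT. Qed.

Lemma susp_repr_collapsed (x : unit_interval * A) :
  susp_collapsed x -> susp_collapsed (repr (\pi_(Susp A) x)).
Proof.
move=> cx; have /susp_eqP : \pi_(Susp A) (repr (\pi_(Susp A) x)) = \pi_(Susp A) x.
  by rewrite reprK.
by case/orP => [/eqP -> // | /andP[]].
Qed.

Lemma phomotopic_susp (W : ptopologicalType)
    (F : unit_interval * (unit_interval * A) -> W) (u v : Susp A -> W) :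
  continuous F -> (forall t p, susp_collapsed p -> F (t, p) = point) ->
  (forall t p, val t = 0 -> F (t, p) = u (\pi_(Susp A) p)) ->
  (forall t p, val t = 1 -> F (t, p) = v (\pi_(Susp A) p)) ->
  phomotopic u v.
Proof.
move=> cF Fc F0 F1; exists (fun z : unit_interval * Susp A => F (z.1, repr z.2)); split.
- apply: (continuous_prod_quotient unit_interval_locally_compact
    unit_interval_hausdorff cF).
  by move=> l a b /susp_eqP /orP[/eqP -> // | /andP[ca cb]]; rewrite !Fc.
- by move=> t t0 q /=; rewrite F0 // reprK.
- by move=> t t1 q /=; rewrite F1 // reprK.
- move=> t /=; apply/Fc/susp_repr_collapsed.
  by rewrite /susp_collapsed /= eqxx.
Qed.

End Suspension.

Lemma susp_collapsed_map (A B : ptopologicalType) (a : A -> B) (p : unit_interval * A) :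
  a point = point -> susp_collapsed p -> susp_collapsed (p.1, a p.2).
Proof.
move=> ap; rewrite /susp_collapsed /= => /or3P[->|->|/eqP ->]; rewrite ?orbT //.
by rewrite ap eqxx !orbT.
Qed.

Lemma susp_map_pi (A B : ptopologicalType) (a : A -> B) (p : unit_interval * A) :
  a point = point -> susp_map a (\pi_(Susp A) p) = \pi_(Susp B) (p.1, a p.2).
Proof.
move=> ap; rewrite /susp_map.
have /susp_eqP : \pi_(Susp A) (repr (\pi_(Susp A) p)) = \pi_(Susp A) p by rewrite reprK.
case/orP => [/eqP -> // | /andP[c1 c2]].
by apply/susp_eqP/orP; right; rewrite !susp_collapsed_map.
Qed.

Lemma susp_map_pointed (A B : ptopologicalType) (a : A -> B) :
  pointed_map a -> pointed_map (susp_map a).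
Proof.
move=> [ca ap]; split; last first.
  by rewrite /= /susp_point susp_map_pi //= ap susp_pi_point.
apply/(@quotient_continuous _ (susp_quot A)).
have -> : susp_map a \o \pi_(quotient_topology (susp_quot A)) =
          \pi_(Susp B) \o (fun p : unit_interval * A => (p.1, a p.2)).
  by apply/funext => p /=; rewrite -susp_map_pi.
move=> p; apply: continuous_comp; last exact: pi_continuous.
apply: continuous_pair; first exact: continuous_fst.
by move=> y; apply: continuous_comp; [exact: continuous_snd | exact: ca].
Qed.

Lemma susp_map_comp (A B C : ptopologicalType) (f : A -> B) (g : B -> C) :
  f point = point -> g point = point ->
  susp_map (g \o f) = susp_map g \o susp_map f.
Proof.
move=> fp gp; apply/funext => q; rewrite -[q]reprK /=.
rewrite susp_map_pi /=; last by rewrite fp gp.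
by rewrite (susp_map_pi _ fp) (susp_map_pi _ gp).
Qed.

Lemma congruent_refl (A B : ptopologicalType) (f : A -> B) :
  pointed_map f -> congruent f f.
Proof. by move=> pf; apply/phomotopic_refl/susp_map_pointed. Qed.

Lemma congruent_comp (A B C : ptopologicalType) (f f' : A -> B) (g g' : B -> C) :
  pointed_map f -> pointed_map f' -> pointed_map g -> pointed_map g' ->
  congruent f f' -> congruent g g' -> congruent (g \o f) (g' \o f').
Proof.
move=> pf pf' pg pg' ff' gg'.
rewrite /congruent (susp_map_comp pf.2 pg.2) (susp_map_comp pf'.2 pg'.2).
apply: (@phomotopic_trans _ _ _ (susp_map g \o susp_map f')).
  exact: phomotopic_comp_l (susp_map_pointed pg) ff'.
exact: phomotopic_comp_r (susp_map_pointed pf') gg'.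
Qed.

Section SuspensionSum.
Variables A X : ptopologicalType.

(* The sum in [Susp A -> Susp X] coming from the co-H structure of the
   suspension: run through [a] on the first half of the suspension coordinate
   and through [b] on the second half. *)
Definition susp_sum_pre (a b : A -> X) (p : unit_interval * A) : Susp X :=
  if val p.1 <= 2^-1 then \pi_(Susp X) (affine_ui 2 0 p.1, a p.2)
  else \pi_(Susp X) (affine_ui 2 (-1) p.1, b p.2).

Definition susp_sum (a b : A -> X) (q : Susp A) : Susp X := susp_sum_pre a b (repr q).

Lemma susp_sum_pre_collapsed (a b : A -> X) (p : unit_interval * A) :
  a point = point -> b point = point -> susp_collapsed p -> susp_sum_pre a b p = point.
Proof.
move=> ap bp; case: p => s x; rewrite /susp_collapsed /susp_sum_pre /=.
case/or3P => [/eqP s0 | /eqP s1 | /eqP ->].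
- rewrite s0 ifT; last lra.
  by apply/susp_pi0/val_clamp_le0; rewrite /= s0; lra.
- rewrite s1 ifF; last by apply/negbTE; rewrite -ltNge; lra.
  by apply/susp_pi1/val_clamp_ge1; rewrite /= s1; lra.
- by case: ifP; rewrite ?ap ?bp susp_pi_point.
Qed.

Lemma susp_sum_pi (a b : A -> X) (p : unit_interval * A) :
  a point = point -> b point = point ->
  susp_sum a b (\pi_(Susp A) p) = susp_sum_pre a b p.
Proof.
move=> ap bp; rewrite /susp_sum.
have /susp_eqP : \pi_(Susp A) (repr (\pi_(Susp A) p)) = \pi_(Susp A) p by rewrite reprK.
case/orP => [/eqP -> // | /andP[c1 c2]].
by rewrite !susp_sum_pre_collapsed.
Qed.

Lemma continuous_susp_sum_pre (K K' : unit_interval * A -> X) :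
  continuous K -> continuous K' ->
  continuous (fun z : unit_interval * (unit_interval * A) =>
    susp_sum_pre (fun x => K (z.1, x)) (fun x => K' (z.1, x)) z.2).
Proof.
move=> cK cK'.
have branch (L : unit_interval * A -> X) (b : RR) : continuous L ->
    continuous (fun z : unit_interval * (unit_interval * A) =>
      \pi_(Susp X) (affine_ui 2 b z.2.1, L (z.1, z.2.2))).
  move=> cL z; apply: continuous_comp; last exact: pi_continuous.
  apply: continuous_pair => w.
    apply: (@continuous_comp _ _ _ snd (fun p : unit_interval * A => affine_ui 2 b p.1));
      first exact: continuous_snd.
    by move=> ?; apply: continuous_comp; [exact: continuous_fst|exact: affine_ui_continuous].
  apply: (@continuous_comp _ _ _ (fun z : unit_interval * (unit_interval * A) => (z.1, z.2.2)) L);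
    last exact: cL.
  apply: continuous_pair; first exact: continuous_fst.
  by move=> ?; apply: continuous_comp; exact: continuous_snd.
apply: continuous_if_le; [|exact: branch|exact: branch|].
  move=> z; apply: (@continuous_comp _ _ _ snd (fun p : unit_interval * A => val p.1)).
    exact: continuous_snd.
  exact: continuous_val_fst.
move=> z zhalf; rewrite susp_pi1 ?susp_pi0 //.
  by rewrite val_clamp_le0 // zhalf; lra.
by rewrite val_clamp_ge1 // zhalf; lra.
Qed.

Lemma susp_sum_phomotopic (a a' b b' : A -> X) :
  phomotopic a a' -> phomotopic b b' -> phomotopic (susp_sum a b) (susp_sum a' b').
Proof.
move=> /[dup] /phomotopic_pointed [ap a'p] [K [cK K0 K1 Kp]].
move=> /[dup] /phomotopic_pointed [bp b'p] [K' [cK' K0' K1' Kp']].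
apply: (phomotopic_susp (continuous_susp_sum_pre cK cK')).
- by move=> t p; apply: susp_sum_pre_collapsed.
- move=> t p t0; rewrite susp_sum_pi // /susp_sum_pre.
  by rewrite (K0 t t0) (K0' t t0).
- move=> t p t1; rewrite susp_sum_pi // /susp_sum_pre.
  by rewrite (K1 t t1) (K1' t t1).
Qed.

End SuspensionSum.

Lemma susp_sum_comp_susp_map (A B X : ptopologicalType) (f : A -> B) (a b : B -> X) :
  f point = point -> a point = point -> b point = point ->
  susp_sum a b \o susp_map f = susp_sum (a \o f) (b \o f).
Proof.
move=> fp ap bp; apply/funext => q; rewrite -[q]reprK /=.
by rewrite (susp_map_pi _ fp) !susp_sum_pi //= fp.
Qed.

(* Suspension coordinate at time [t] of the homotopy from [Susp ((a, b) o mu)]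
   to the suspension sum, at a point [(s, x)] with [mu x] in the summand [i]:
   it goes from [s] at [t = 0] to [2 s] (for [i = true]) or [2 s - 1] (for
   [i = false]) at [t = 1], and is clamped into [0, 1] where it is used. *)
Definition pinch_time (i : bool) (t s : unit_interval) : RR :=
  (1 + val t) * val s - (if i then 0 else val t).

Lemma continuous_pinch_time (i : bool) :
  continuous (fun l : unit_interval * unit_interval => pinch_time i l.1 l.2).
Proof.
have cu := @continuous_val_fst unit_interval.
have cv : continuous (fun l : unit_interval * unit_interval => val l.2).
  move=> l; apply: (@continuous_comp _ _ _ snd (fun t : unit_interval => val t));
    [exact: continuous_snd | exact: val_unit_interval_continuous].
move=> l; apply: (@continuousB RR RR^o _
  (fun l : unit_interval * unit_interval => (1 + val l.1) * val l.2)
  (fun l => if i then 0 else val l.1)).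
  apply: (@continuousM RR _ (fun l : unit_interval * unit_interval => 1 + val l.1));
    last exact: cv.
  by apply: (@continuousD RR RR^o _ (fun _ => 1)); [exact: cst_continuous | exact: cu].
by case: i; [exact: cst_continuous | exact: cu].
Qed.

Section PinchHomotopy.
Variables (A X : ptopologicalType) (mu : A -> wedge2 A) (a b : A -> X).
Hypotheses (pmu : pointed_map mu) (pa : pointed_map a) (pb : pointed_map b).

Definition pinch_summand (l : unit_interval * unit_interval) (i : bool) (y : A) :
    Susp X :=
  \pi_(Susp X) (clamp (pinch_time i l.1 l.2), if i then a y else b y).

Definition pinch_homotopy (z : unit_interval * (unit_interval * A)) : Susp X :=
  wedge_fun (pinch_summand (z.1, z.2.1) : forall i : bool, (fun _ => A) i -> Susp X)
    (mu z.2.2).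

Lemma pinch_summand_point l i j : pinch_summand l i point = pinch_summand l j point.
Proof.
have [_ ap] := pa; have [_ bp] := pb.
by rewrite /pinch_summand; case: i; case: j; rewrite ?ap ?bp !susp_pi_point.
Qed.

Lemma continuous_pinch_homotopy : continuous pinch_homotopy.
Proof.
have [cm _] := pmu; have [ca _] := pa; have [cb _] := pb.
move=> z; apply: (@continuous_comp _ _ _
    (fun z : unit_interval * (unit_interval * A) => ((z.1, z.2.1), mu z.2.2))
    (fun z : (unit_interval * unit_interval) * wedge2 A =>
       wedge_fun (pinch_summand z.1 : forall i : bool, (fun _ => A) i -> Susp X) z.2)).
  apply: continuous_pair; first apply: continuous_pair; first exact: continuous_fst.
    by move=> w; apply: continuous_comp; [exact: continuous_snd | exact: continuous_fst].
  move=> w; apply: continuous_comp; last exact: cm.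
  by apply: continuous_comp; exact: continuous_snd.
apply: continuous_prod_wedge2; last exact: pinch_summand_point.
- exact: compact_locally_compact unit_interval2_compact.
- exact: prod_hausdorff unit_interval_hausdorff unit_interval_hausdorff.
- move=> i w; apply: continuous_comp; last exact: pi_continuous.
  apply: continuous_pair => v.
    apply: (@continuous_comp _ _ _ (fun z : (unit_interval * unit_interval) * A => z.1)
      (fun l => clamp (pinch_time i l.1 l.2))); first exact: continuous_fst.
    by move=> ?; apply: continuous_comp; [exact: continuous_pinch_time | exact: clamp_continuous].
  by case: i; apply: continuous_comp; (exact: continuous_snd || exact: ca || exact: cb).
Qed.

Lemma pinch_homotopy_collapsed t p : susp_collapsed p -> pinch_homotopy (t, p) = point.
Proof.
have [_ mp] := pmu; have [_ ap] := pa; case: p => s x.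
rewrite /susp_collapsed /pinch_homotopy /= => /or3P[/eqP s0 | /eqP s1 | /eqP ->].
- have [i [y ->]] := wedge_fun_repr (mu x); apply/susp_pi0/val_clamp_le0.
  have t0 : 0 <= sval t := unit_interval_ge0 t.
  by rewrite /pinch_time /= s0; case: i; lra.
- have [i [y ->]] := wedge_fun_repr (mu x); apply/susp_pi1/val_clamp_ge1.
  have t0 : 0 <= sval t := unit_interval_ge0 t.
  by rewrite /pinch_time /= s1; case: i; lra.
- rewrite mp (wedge_fun_point (pinch_summand_point (t, s))).
  by rewrite /pinch_summand /= ap susp_pi_point.
Qed.

Lemma susp_coH_sum_wedge_proj :
  phomotopic (susp_map (coH_sum mu a b))
             (susp_sum (a \o wedge_proj true \o mu) (b \o wedge_proj false \o mu)).
Proof.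
have [_ mp] := pmu; have [_ ap] := pa; have [_ bp] := pb.
apply: (phomotopic_susp continuous_pinch_homotopy pinch_homotopy_collapsed).
- move=> t [s x] t0; have [_ psum] := coH_sum_pointed pmu pa pb.
  rewrite susp_map_pi //= /pinch_homotopy /coH_sum /=.
  have [i [y E]] := wedge_fun_repr (mu x); rewrite !E /pinch_summand {E}.
  have -> : pinch_time i t s = val s by rewrite /pinch_time t0; case: i; lra.
  by rewrite clampK; case: i.
- move=> t [s x] t1.
  rewrite susp_sum_pi; last 2 first.
  + by rewrite /= mp wedge_proj_point ap.
  + by rewrite /= mp wedge_proj_point bp.
  rewrite /susp_sum_pre /pinch_homotopy /= /wedge_proj.
  have [i [y E]] := wedge_fun_repr (mu x); rewrite !E /pinch_summand {E}.
  have -> : pinch_time i t s = 2 * val s + (if i then 0 else -1).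
    by rewrite /pinch_time t1; case: i; lra.
  case: i; case: ifP => half //=.
  + rewrite bp susp_pi_point susp_pi1 //; apply: val_clamp_ge1.
    by move/negbT: half; rewrite -ltNge => ?; lra.
  + by rewrite ap susp_pi_point susp_pi0 //; apply: val_clamp_le0; lra.
Qed.

End PinchHomotopy.

Lemma susp_coH_sum (A X : ptopologicalType) (mu : A -> wedge2 A) (a b : A -> X) :
  coH_structure mu -> pointed_map a -> pointed_map b ->
  phomotopic (susp_map (coH_sum mu a b)) (susp_sum a b).
Proof.
move=> [pmu projT projF] pa pb.
apply: (phomotopic_trans (susp_coH_sum_wedge_proj pmu pa pb)).
exact: susp_sum_phomotopic (phomotopic_comp_l pa projT) (phomotopic_comp_l pb projF).
Qed.

Lemma congruent_coH_sum_comp (G H X : ptopologicalType)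
    (muG : G -> wedge2 G) (muH : H -> wedge2 H) (f : G -> H) (g1 g2 : H -> X) :
  coH_structure muG -> coH_structure muH ->
  pointed_map f -> pointed_map g1 -> pointed_map g2 ->
  congruent (coH_sum muH g1 g2 \o f) (coH_sum muG (g1 \o f) (g2 \o f)).
Proof.
move=> coG coH pf pg1 pg2; have [pmuH _ _] := coH.
have pg1f := pointed_map_comp pf pg1; have pg2f := pointed_map_comp pf pg2.
rewrite /congruent (susp_map_comp pf.2 (coH_sum_pointed pmuH pg1 pg2).2).
apply: (@phomotopic_trans _ _ _ (susp_sum (g1 \o f) (g2 \o f))); last first.
  exact/phomotopic_sym/susp_coH_sum.
rewrite -(susp_sum_comp_susp_map pf.2 pg1.2 pg2.2).
exact: phomotopic_comp_r (susp_map_pointed pf) (susp_coH_sum coH pg1 pg2).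
Qed.

Theorem proposition5p13 (G H X : ptopologicalType)
    (muG : G -> wedge2 G) (muH : H -> wedge2 H) :
  coH_structure muG -> coH_structure muH ->
  [/\ (forall (f f' : G -> H) (g g' : H -> X),
         pointed_map f -> pointed_map f' -> pointed_map g -> pointed_map g' ->
         congruent f f' -> congruent g g' -> congruent (g \o f) (g' \o f')),
      (forall (f1 f2 : G -> H) (g : H -> X),
         pointed_map f1 -> pointed_map f2 -> pointed_map g ->
         congruent (g \o coH_sum muG f1 f2) (coH_sum muG (g \o f1) (g \o f2))) &
      (forall (f : G -> H) (g1 g2 : H -> X),
         pointed_map f -> pointed_map g1 -> pointed_map g2 ->
         congruent (coH_sum muH g1 g2 \o f) (coH_sum muG (g1 \o f) (g2 \o f)))].
Proof.
move=> coG coH; have [pmuG _ _] := coG; split.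
- exact: congruent_comp.
- move=> f1 f2 g pf1 pf2 pg; rewrite comp_coH_sum.
  apply: congruent_refl.
  exact: coH_sum_pointed pmuG (pointed_map_comp pf1 pg) (pointed_map_comp pf2 pg).
- move=> f g1 g2; exact: congruent_coH_sum_comp.
Qed.
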